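(* Suppose that $A \in (\mathbb{S}_{\max})^{n \times n}$, let $\gamma$ be a $\mathbb{S}_{\max}$-eigenvalue of $A$ and denote $B=\gamma I \ominus A$. Then \[ A \, B^{\mathrm{adj}} \,\nabla\, \gamma B^{\mathrm{adj}} \enspace. \]
   Context: $\mathbb{S}_{\max}$ is the symmetrized tropical semiring over a divisible totally ordered abelian group, with zero $\mathbf{0}$, unit $\mathbf{1}$, minus $\ominus$; $\mathbb{S}_{\max}^\vee$ is the set of signed elements (positive, negative, or $\mathbf{0}$). The balance relation is $a\,\nabla\, b$ iff $a\ominus b$ is balanced (of the form $c\ominus c$), applied entrywise to matrices. $\det(A)=\bigoplus_\pi\mathrm{sgn}(\pi)\prod_i a_{i\pi(i)}$ with $\mathrm{sgn}(\pi)\in\{\mathbf{1},\ominus\mathbf{1}\}$; $(B^{\mathrm{adj}})_{ij}=(\ominus\mathbf{1})^{i+j}\det B[\hat j,\hat i]$, where $B[\hat j,\hat i]$ is $B$ with row $j$ and column $i$ removed. An $\mathbb{S}_{\max}$-eigenvalue of $A$ is a $\gamma\in\mathbb{S}_{\max}^\vee$ with $\det(\gamma I\ominus A)\,\nabla\,\mathbf{0}$. *)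

From mathcomp Require Import all_boot all_order all_algebra all_fingroup.
Set Implicit Arguments. Unset Strict Implicit. Unset Printing Implicit Defensive.
Import GRing.Theory.
Local Open Scope ring_scope.

Record doag := DOAG {
  dcar : zmodType;
  dle : rel dcar;
  dle_refl : forall a, dle a a;
  dle_anti : forall a b, dle a b -> dle b a -> a = b;
  dle_trans : forall a b c, dle a b -> dle b c -> dle a c;
  dle_total : forall a b, dle a b || dle b a;
  dle_add : forall a b c, dle a b -> dle (a + c) (b + c);
  ddivisible : forall (k : nat) (a : dcar), exists b : dcar, b *+ k.+1 = a
}.

(* Elements of S_max: zero, positive (+)a, negative (-)a, balanced a^• ,
   where a in the group is the modulus (tropical "value"). *)
Inductive smax (G : doag) : Type :=
| SZero | SPos of dcar G | SNeg of dcar G | SBal of dcar G.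
Arguments SZero {G}.

Section Smax.
Variable G : doag.
Local Notation S := (smax G).

Definition dlt (a b : dcar G) := dle a b && ~~ dle b a.

Definition sadd (x y : S) : S :=
  match x, y with
  | SZero, _ => y
  | _, SZero => x
  | SPos a, SPos b => if dlt a b then y else if dlt b a then x else SPos a
  | SNeg a, SNeg b => if dlt a b then y else if dlt b a then x else SNeg a
  | SPos a, SNeg b | SNeg a, SPos b | SPos a, SBal b | SNeg a, SBal b
  | SBal a, SPos b | SBal a, SNeg b | SBal a, SBal b =>
      if dlt a b then y else if dlt b a then x else SBal a
  end.

Definition smul (x y : S) : S :=
  match x, y with
  | SZero, _ | _, SZero => SZero
  | SPos a, SPos b | SNeg a, SNeg b => SPos (a + b)
  | SPos a, SNeg b | SNeg a, SPos b => SNeg (a + b)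
  | SBal a, SPos b | SBal a, SNeg b | SBal a, SBal b
  | SPos a, SBal b | SNeg a, SBal b => SBal (a + b)
  end.

Definition sopp (x : S) : S :=
  match x with SPos a => SNeg a | SNeg a => SPos a | _ => x end.

Definition sone : S := SPos 0.

Definition ssigned (x : S) : bool := if x is SBal _ then false else true.

Definition sbalanced (x : S) : Prop := exists c : S, x = sadd c (sopp c).

Definition snabla (x y : S) : Prop := sbalanced (sadd x (sopp y)).

Definition mxnabla m n (A B : 'M[S]_(m, n)) : Prop :=
  forall i j, snabla (A i j) (B i j).

Definition ssign_perm n (s : 'S_n) : S := if odd_perm s then sopp sone else sone.

Definition sdet n (A : 'M[S]_n) : S :=
  \big[sadd/SZero]_(s : 'S_n) smul (ssign_perm s) (\big[smul/sone]_(i < n) A i (s i)).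

Definition ssign_nat (k : nat) : S := if odd k then sopp sone else sone.

Definition sadj n (B : 'M[S]_n) : 'M[S]_n :=
  \matrix_(i, j) smul (ssign_nat (i + j)) (sdet (row' j (col' i B))).

Definition smulmx m n p (A : 'M[S]_(m, n)) (B : 'M[S]_(n, p)) : 'M[S]_(m, p) :=
  \matrix_(i, j) \big[sadd/SZero]_(k < n) smul (A i k) (B k j).

Definition sscalemx m n (c : S) (A : 'M[S]_(m, n)) : 'M[S]_(m, n) :=
  \matrix_(i, j) smul c (A i j).

Definition sidmx n : 'M[S]_n := \matrix_(i, j) if i == j then sone else SZero.

Definition ssubmx m n (A B : 'M[S]_(m, n)) : 'M[S]_(m, n) :=
  \matrix_(i, j) sadd (A i j) (sopp (B i j)).

Definition s_eigenvalue n (A : 'M[S]_n) (g : S) : Prop :=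
  ssigned g /\ snabla (sdet (ssubmx (sscalemx g (sidmx n)) A)) SZero.

End Smax.
Arguments sidmx {G} n.

From HB Require Import structures.
From mathcomp Require Import all_boot all_order all_algebra all_fingroup.
Set Implicit Arguments. Unset Strict Implicit. Unset Printing Implicit Defensive.
Import GRing.Theory.
Local Open Scope ring_scope.

(* Proof idea: by the tropical Laplace expansion, the (i, j) entry of B B^adj
   is the determinant of B with row j replaced by row i.  For i = j this is
   det B, which is balanced because gamma is an eigenvalue; for i <> j the
   matrix has two equal rows, and composing with the transposition of these
   rows pairs every term of the determinant with its opposite, so the
   determinant is balanced as well.  Since B B^adj = gamma B^adj (-) A B^adj
   entrywise, A B^adj and gamma B^adj are balanced against each other. *)

Section ModulusOrder.
Variable G : doag.
Implicit Types a b c : dcar G.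

Lemma dltxx a : dlt a a = false.
Proof. by rewrite /dlt dle_refl. Qed.

Lemma dlt_trans a b c : dlt a b -> dlt b c -> dlt a c.
Proof.
rewrite /dlt => /andP[ab nba] /andP[bc ncb]; apply/andP; split.
  exact: dle_trans ab bc.
by apply: contra nba => ca; apply: dle_trans bc ca.
Qed.

Lemma dlt_asym a b : dlt a b -> dlt b a -> False.
Proof. by move=> ab ba; have := dlt_trans ab ba; rewrite dltxx. Qed.

Variant dcmp_spec a b : bool -> bool -> Prop :=
| DCmpLt of dlt a b : dcmp_spec a b true false
| DCmpEq of a = b : dcmp_spec a b false false
| DCmpGt of dlt b a : dcmp_spec a b false true.

Lemma dcmpP a b : dcmp_spec a b (dlt a b) (dlt b a).
Proof.
rewrite /dlt; case ab: (dle a b); case ba: (dle b a) => /=.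
- by apply: DCmpEq; apply: dle_anti.
- by apply: DCmpLt; rewrite /dlt ab ba.
- by apply: DCmpGt; rewrite /dlt ab ba.
- by have := dle_total a b; rewrite ab ba.
Qed.

Lemma dle_add2l a b c : dle (a + b) (a + c) = dle b c.
Proof.
apply/idP/idP => [|bc]; last by rewrite ![a + _]addrC dle_add.
by move/(dle_add (- a)); rewrite ![a + _]addrC !addrK.
Qed.

Lemma dlt_add2l a b c : dlt (a + b) (a + c) = dlt b c.
Proof. by rewrite /dlt !dle_add2l. Qed.

End ModulusOrder.

Ltac dcmp_cases :=
  repeat match goal with
  | |- context [dlt ?a ?a] => rewrite dltxx
  | |- context [dlt ?a ?b] => case: (dcmpP a b) => [?|?|?]; subst => /=
  end.

Ltac dlt_contra :=
  exfalso; match goal with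
  | H : is_true (dlt ?x ?x) |- _ => by rewrite dltxx in H
  | H1 : is_true (dlt ?x ?y), H2 : is_true (dlt ?y ?x) |- _ => exact: dlt_asym H1 H2
  | H1 : is_true (dlt ?x ?y), H2 : is_true (dlt ?y ?z), H3 : is_true (dlt ?z ?x) |- _ =>
      exact: dlt_asym (dlt_trans H1 H2) H3
  end.

Section Semiring.
Variable G : doag.
Local Notation S := (smax G).
Local Notation "1" := (sone G).
Implicit Types x y z : S.

Lemma addsA : associative (@sadd G).
Proof. by move=> [|a|a|a] [|b|b|b] [|c|c|c] //=; dcmp_cases => //; dlt_contra. Qed.

Lemma addsC : commutative (@sadd G).
Proof. by move=> [|a|a|a] [|b|b|b] //=; dcmp_cases => //; dlt_contra. Qed.

Lemma add0s : left_id SZero (@sadd G).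
Proof. by case. Qed.

Lemma adds0 : right_id SZero (@sadd G).
Proof. by case. Qed.

Lemma addss x : sadd x x = x.
Proof. by case: x => //= a; rewrite dltxx. Qed.

Lemma mulsA : associative (@smul G).
Proof. by move=> [|a|a|a] [|b|b|b] [|c|c|c] //=; rewrite addrA. Qed.

Lemma mulsC : commutative (@smul G).
Proof. by move=> [|a|a|a] [|b|b|b] //=; rewrite addrC. Qed.

Lemma mul1s : left_id 1 (@smul G).
Proof. by case=> //= a; rewrite add0r. Qed.

Lemma muls1 : right_id 1 (@smul G).
Proof. by move=> x; rewrite mulsC mul1s. Qed.

Lemma mul0s : left_zero SZero (@smul G).
Proof. by []. Qed.

Lemma muls0 : right_zero SZero (@smul G).
Proof. by case. Qed.

Lemma mulsDr : right_distributive (@smul G) (@sadd G).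
Proof.
by move=> [|a|a|a] [|b|b|b] [|c|c|c] //=; rewrite ?dlt_add2l; dcmp_cases.
Qed.

Lemma mulsDl : left_distributive (@smul G) (@sadd G).
Proof. by move=> x y z; rewrite mulsC mulsDr ![smul z _]mulsC. Qed.

Lemma mulsCA x y z : smul x (smul y z) = smul y (smul x z).
Proof. by rewrite !mulsA (mulsC x). Qed.

Lemma oppsK : involutive (@sopp G).
Proof. by case. Qed.

Lemma oppsD x y : sopp (sadd x y) = sadd (sopp x) (sopp y).
Proof. by move: x y => [|a|a|a] [|b|b|b] //=; dcmp_cases. Qed.

Lemma mulNs x y : smul (sopp x) y = sopp (smul x y).
Proof. by move: x y => [|a|a|a] [|b|b|b]. Qed.

End Semiring.

HB.instance Definition _ (G : doag) :=
  Monoid.isComLaw.Build (smax G) SZero (@sadd G) (@addsA G) (@addsC G) (@add0s G).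
HB.instance Definition _ (G : doag) :=
  Monoid.isComLaw.Build (smax G) (sone G) (@smul G) (@mulsA G) (@mulsC G) (@mul1s G).
HB.instance Definition _ (G : doag) :=
  Monoid.isMulLaw.Build (smax G) SZero (@smul G) (@mul0s G) (@muls0 G).
HB.instance Definition _ (G : doag) :=
  Monoid.isAddLaw.Build (smax G) (@smul G) (@sadd G) (@mulsDl G) (@mulsDr G).

Section UnliftPerm.
Variables (n : nat) (i : 'I_n.+1).

Definition unlift_perm_fun (s : 'S_n.+1) (k : 'I_n) : 'I_n :=
  odflt k (unlift (s i) (s (lift i k))).

Lemma lift_unlift_perm_fun (s : 'S_n.+1) (k : 'I_n) :
  lift (s i) (unlift_perm_fun s k) = s (lift i k).
Proof.
have : s i != s (lift i k) by rewrite (inj_eq perm_inj) neq_lift.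
by case/unlift_some=> k' eqk' unl; rewrite /unlift_perm_fun unl.
Qed.

Lemma unlift_perm_fun_inj (s : 'S_n.+1) : injective (unlift_perm_fun s).
Proof.
move=> k1 k2 /(congr1 (lift (s i))); rewrite !lift_unlift_perm_fun.
by move/perm_inj/lift_inj.
Qed.

Definition unlift_perm (s : 'S_n.+1) : 'S_n := perm (@unlift_perm_fun_inj s).

Lemma unlift_permK (s : 'S_n.+1) : lift_perm i (s i) (unlift_perm s) = s.
Proof.
apply/permP => k; case: (unliftP i k) => [k'|] ->; last by rewrite lift_perm_id.
by rewrite lift_perm_lift permE lift_unlift_perm_fun.
Qed.

Lemma lift_permK j (u : 'S_n) : unlift_perm (lift_perm i j u) = u.
Proof.
apply/permP => k; apply: (@lift_inj _ j).
by rewrite permE -{1}(lift_perm_id i j u) lift_unlift_perm_fun lift_perm_lift.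
Qed.

End UnliftPerm.

Lemma big_lift_perm R (idx : R) (op : Monoid.com_law idx) n (i j : 'I_n.+1)
    (F : 'S_n.+1 -> R) :
  \big[op/idx]_(s : 'S_n.+1 | s i == j) F s =
  \big[op/idx]_(u : 'S_n) F (lift_perm i j u).
Proof.
rewrite (reindex (lift_perm i j)) => [|/=].
  by apply: eq_bigl => u; rewrite lift_perm_id eqxx.
exists (unlift_perm i) => [u _ | s /eqP <-]; first exact: lift_permK.
exact: unlift_permK.
Qed.

Section Balance.
Variable G : doag.
Local Notation S := (smax G).
Implicit Types x y : S.

Lemma sbalanced_sopp_eq x : sopp x = x -> sbalanced x.
Proof. by move=> Nx; exists x; rewrite Nx addss. Qed.

Lemma snabla_sym x y : snabla x y -> snabla y x.
Proof.
case=> c xy; exists (sopp c).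
by rewrite -[sadd y _]oppsK oppsD oppsK addsC xy oppsD.
Qed.

Lemma snablax0 x : snabla x SZero <-> sbalanced x.
Proof. by rewrite /snabla adds0. Qed.

End Balance.

Section Determinant.
Variable G : doag.
Local Notation S := (smax G).
Local Notation "1" := (sone G).
Local Notation sadd := (@sadd G).
Local Notation smul := (@smul G).
Local Notation ssign_perm := (ssign_perm G).
Local Notation ssign_nat := (ssign_nat G).

Lemma sopp_sum I (r : seq I) (P : pred I) (F : I -> S) :
  sopp (\big[sadd/SZero]_(i <- r | P i) F i) = \big[sadd/SZero]_(i <- r | P i) sopp (F i).
Proof. exact: (big_morph (@sopp G) (@oppsD G) (erefl _)). Qed.

Lemma ssign_lift_perm n (i j : 'I_n.+1) (u : 'S_n) :
  ssign_perm (lift_perm i j u) = smul (ssign_nat (i + j)) (ssign_perm u).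
Proof.
rewrite /ssign_perm /ssign_nat odd_lift_perm oddD.
by case: (odd i); case: (odd j); case: (odd_perm u); rewrite /= ?addr0 ?mul1s.
Qed.

Lemma ssign_tpermM n (i j : 'I_n) (s : 'S_n) :
  i != j -> ssign_perm (tperm i j * s) = sopp (ssign_perm s).
Proof.
by move=> ij; rewrite /ssign_perm odd_permM odd_tperm ij; case: (odd_perm s).
Qed.

Definition scofactor n (M : 'M[S]_n) (i j : 'I_n) : S :=
  smul (ssign_nat (i + j)) (sdet (row' i (col' j M))).

Lemma sdet_expand_row n (M : 'M[S]_n.+1) i :
  sdet M = \big[sadd/SZero]_j smul (M i j) (scofactor M i j).
Proof.
rewrite /sdet (partition_big (fun s : 'S_n.+1 => s i) predT) //=.
apply: eq_bigr => j _; rewrite big_lift_perm /scofactor /sdet !big_distrr /=.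
apply: eq_bigr => u _; rewrite (bigD1_ord i) //= lift_perm_id ssign_lift_perm.
have minorE : \big[smul/1]_(k < n) M (lift i k) (lift_perm i j u (lift i k)) =
              \big[smul/1]_(k < n) row' i (col' j M) k (u k).
  by apply: eq_bigr => k _; rewrite !mxE lift_perm_lift.
by rewrite minorE mulsCA !mulsA.
Qed.

Lemma sdet_eq_rows n (M : 'M[S]_n) i j :
  i != j -> M i =1 M j -> sbalanced (sdet M).
Proof.
move=> ij Mij; apply: sbalanced_sopp_eq.
rewrite /sdet sopp_sum (reindex_inj (mulgI (tperm i j))) /=.
apply: eq_bigr => s _; rewrite ssign_tpermM // mulNs oppsK; congr smul.
rewrite [RHS](reindex_inj (inv_inj (tpermK i j))) /=.
apply: eq_bigr => k _; rewrite permM.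
by case: tpermP => [->|->|//]; rewrite ?Mij.
Qed.
End Determinant.

Section Adjugate.
Variable G : doag.
Local Notation S := (smax G).
Local Notation smul := (@smul G).

Lemma smulmx_sadj n (B : 'M[S]_n) i j :
  smulmx B (sadj B) i j = sdet (rowsub (fun r => if r == j then i else r) B).
Proof.
case: n => [|n] in B i j *; first by case: i.
rewrite (sdet_expand_row _ j) mxE; apply: eq_bigr => k _.
rewrite !mxE eqxx /scofactor addnC; congr (smul _ (smul _ (sdet _))).
apply/matrixP => r c; rewrite !mxE.
by rewrite (eq_sym (lift j r)) (negbTE (neq_lift _ _)).
Qed.

Lemma smulmx_sadj_diag n (B : 'M[S]_n) i : smulmx B (sadj B) i i = sdet B.
Proof.
rewrite smulmx_sadj; congr sdet; apply/matrixP => r c.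
by rewrite mxE; case: eqP => [->|].
Qed.

Lemma smulmx_sadj_offdiag n (B : 'M[S]_n) i j :
  i != j -> sbalanced (smulmx B (sadj B) i j).
Proof.
move=> ij; rewrite smulmx_sadj; apply: (sdet_eq_rows ij) => c.
by rewrite !mxE eqxx (negbTE ij).
Qed.

Lemma smulmx_ssubl m n p (X Y : 'M[S]_(m, n)) (Z : 'M[S]_(n, p)) :
  smulmx (ssubmx X Y) Z = ssubmx (smulmx X Z) (smulmx Y Z).
Proof.
apply/matrixP => i j; rewrite !mxE sopp_sum -big_split /=.
by apply: eq_bigr => k _; rewrite mxE mulsDl mulNs.
Qed.

Lemma smulmx_scale_sidmx n p (c : S) (Z : 'M[S]_(n, p)) :
  smulmx (sscalemx c (sidmx n)) Z = sscalemx c Z.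
Proof.
apply/matrixP => i j; rewrite !mxE (bigD1 i) //= big1 => [|k /negbTE ki].
  by rewrite !mxE eqxx muls1 adds0.
by rewrite !mxE eq_sym ki muls0.
Qed.

End Adjugate.

Theorem proposition3p35 (G : doag) (n : nat) (A : 'M[smax G]_n) (g : smax G) :
  s_eigenvalue A g ->
  let B := ssubmx (sscalemx g (sidmx n)) A in
  mxnabla (smulmx A (sadj B)) (sscalemx g (sadj B)).
Proof.
move=> [_ /snablax0 detB] B i j; apply: snabla_sym.
have BadjB : sbalanced (smulmx B (sadj B) i j).
  have [<-|ij] := eqVneq i j; last exact: smulmx_sadj_offdiag.
  by rewrite smulmx_sadj_diag.
by move: BadjB; rewrite /B smulmx_ssubl smulmx_scale_sidmx mxE.
Qed.
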